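(* Let $a, b, n$ be positive integers with $b>1$, $n>1$ and $\gcd(r_b(n),a)=1$, and let $S = S_a(b,n)$. Then $S$ satisfies Wilf's inequality: $\operatorname{F}(S) \le \operatorname{e}(S)\,\operatorname{n}(S) - 1$.
   Context: For $\ell \ge 1$, $r_b(\ell) = \sum_{j=0}^{\ell-1} b^j$, and $r_b(0)=0$. For $i \ge 1$, $a_i := r_b(n) + a\, r_b(i-1)$; $S_a(b,n)$ is the numerical semigroup generated by $\{a_i : i \ge 1\}$. For a numerical semigroup $S$: $\operatorname{F}(S)$ is the largest integer not in $S$; $\operatorname{e}(S)$ is the embedding dimension (cardinality of the minimal generating set); $\operatorname{n}(S)$ is the cardinality of $\{s \in S : s < \operatorname{F}(S)\}$. *)

From mathcomp Require Import all_boot.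
Set Implicit Arguments. Unset Strict Implicit. Unset Printing Implicit Defensive.

Definition rb (b l : nat) : nat := \sum_(j < l) b ^ j.

(* a_i = r_b(n) + a * r_b(i-1), meaningful for i >= 1. *)
Definition agen (a b n i : nat) : nat := rb b n + a * rb b (i - 1).

Definition Sab (a b n : nat) (x : nat) : Prop :=
  exists s : seq nat, x = sumn (map (fun i => agen a b n i.+1) s).

Definition gen_by (G : seq nat) (x : nat) : Prop :=
  exists s : seq nat, all (fun y => y \in G) s /\ x = sumn s.

Definition is_frobenius (S : nat -> Prop) (F : nat) : Prop :=
  ~ S F /\ forall y, F < y -> S y.

(* G is the minimal generating set of S: G (duplicate-free) generates S,
   and no element of G lies in the submonoid generated by the others
   (equivalently, no proper subset of G generates S). *)
Definition is_min_gen_set (S : nat -> Prop) (G : seq nat) : Prop :=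
  uniq G /\ (forall x, S x <-> gen_by G x) /\
  (forall g, g \in G -> ~ gen_by (rem g G) g).

Definition is_small_elts (S : nat -> Prop) (F : nat) (L : seq nat) : Prop :=
  uniq L /\ forall x, x \in L <-> (S x /\ x < F).

From mathcomp Require Import all_boot zify.
From Stdlib Require Import Classical ClassicalEpsilon.
Set Implicit Arguments. Unset Strict Implicit. Unset Printing Implicit Defensive.

(* An element of S is k r + a t with r = r_b(n) and t a sum of at most k
   repunits.  Since gcd(r, a) = 1, every gap x of S lies below one of the n - 1
   numbers f_j = (b - 1) j r + a (r - j), 0 < j < n, in the sense f_j - x \in S:
   choose u < r with a u = x (mod r) and split r = u + j + (r - j - u) into few
   repunits.  The f_j are themselves gaps: writing f_j = k r + a t makes
   (b - 1) t + k a sum of k powers of b, so of base-b digit sum at most k,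
   whereas its explicit form has a larger digit sum.  Hence F(S) = max f_j, every gap up to F(S) is f_j - s with
   s \in S and s < F(S), so F(S) + 1 <= (n - 1) n(S) + n(S), while the minimal
   generators are a_1, ..., a_n. *)

Section DigitSum.

Variable b : nat.
Hypothesis b_gt1 : 1 < b.

Fixpoint digsum_rec (fuel N : nat) : nat :=
  if fuel is fuel'.+1 then N %% b + digsum_rec fuel' (N %/ b) else 0.

(* [N] digits always suffice since [b > 1]. *)
Definition digsum (N : nat) : nat := digsum_rec N N.

Lemma digsum_rec0 fuel : digsum_rec fuel 0 = 0.
Proof. by elim: fuel => //= fuel IH; rewrite mod0n div0n IH. Qed.

Lemma digsum_rec_enough f g N : N <= f -> N <= g -> digsum_rec f N = digsum_rec g N.
Proof.
elim: f g N => [|f IH] [|g] N //; rewrite ?leqn0.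
- by move/eqP=> -> _; rewrite !digsum_rec0.
- by move=> _ /eqP ->; rewrite !digsum_rec0.
move=> Nf Ng /=; have [->|N_gt0] := posnP N; first by rewrite div0n !digsum_rec0.
have : N %/ b < N by rewrite ltn_Pdiv.
by move=> ltN; congr (_ + _); apply: IH; lia.
Qed.

Lemma digsum_digit d z : d < b -> digsum (d + b * z) = d + digsum z.
Proof.
move=> ltdb; rewrite /digsum.
have [N0|N_gt0] := posnP (d + b * z).
  have -> : d = 0 by lia.
  have -> : z = 0 by nia.
  by rewrite muln0.
case E: (d + b * z) => [|f]; first by rewrite E in N_gt0.
rewrite /= -E.
have -> : (d + b * z) %% b = d by rewrite addnC mulnC modnMDl modn_small.
have -> : (d + b * z) %/ b = z by rewrite addnC mulnC divnMDl ?divn_small ?addn0 //; lia.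
by congr (_ + _); apply: digsum_rec_enough; nia.
Qed.

Lemma digsum_divmod N : digsum N = N %% b + digsum (N %/ b).
Proof. by rewrite {1}(divn_eq N b) addnC mulnC digsum_digit // ltn_pmod //; lia. Qed.

Lemma digsum1 : digsum 1 = 1.
Proof. by have := digsum_digit 0 b_gt1; rewrite muln0 addn0. Qed.

Lemma digsum_le N : digsum N <= N.
Proof.
elim: N {-2}N (leqnn N) => [|M IH] N leNM; first by move: leNM; rewrite leqn0 => /eqP ->.
have [->//|N_gt0] := posnP N.
have ltN : N %/ b < N by rewrite ltn_Pdiv.
rewrite digsum_divmod; have := IH (N %/ b) ltac:(lia); have := divn_eq N b; nia.
Qed.

Lemma digsum_add x y : digsum (x + y) <= digsum x + digsum y.
Proof.
elim: (x + y) {-2}x {-2}y (leqnn (x + y)) => [|M IH] {}x {}y lexyM.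
  by have [-> ->] : x = 0 /\ y = 0 by lia.
have [xy0|xy_gt0] := posnP (x + y).
  by have [-> ->] : x = 0 /\ y = 0 by lia.
rewrite (digsum_divmod x) (digsum_divmod y).
have Ex := divn_eq x b; have Ey := divn_eq y b.
have ltx := ltn_pmod x (ltnW b_gt1); have lty := ltn_pmod y (ltnW b_gt1).
have IHq : digsum (x %/ b + y %/ b) <= digsum (x %/ b) + digsum (y %/ b) by apply: IH; nia.
have [noCarry|carry] := ltnP (x %% b + y %% b) b.
  have -> : x + y = (x %% b + y %% b) + b * (x %/ b + y %/ b) by lia.
  by rewrite digsum_digit //; lia.
have -> : x + y = (x %% b + y %% b - b) + b * ((x %/ b + y %/ b) + 1) by nia.
rewrite digsum_digit; last by lia.
have : digsum (x %/ b + y %/ b + 1) <= digsum (x %/ b + y %/ b) + digsum 1 by apply: IH; nia.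
by rewrite digsum1; lia.
Qed.

Lemma digsum_exp c : digsum (b ^ c) = 1.
Proof.
elim: c => [|c IH]; first exact: digsum1.
by rewrite expnS -(add0n (b * _)) digsum_digit ?IH //; lia.
Qed.

Lemma digsum_sum_exp (s : seq nat) : digsum (sumn [seq b ^ c | c <- s]) <= size s.
Proof.
elim: s => [|c s IH] //=.
by have := digsum_add (b ^ c) (sumn [seq b ^ c | c <- s]); rewrite digsum_exp; lia.
Qed.

Lemma digsum_shift n y q : y < b ^ n -> digsum (y + b ^ n * q) = digsum y + digsum q.
Proof.
elim: n y => [|n IH] y lty.
  by move: lty; rewrite expn0 ltnS leqn0 => /eqP ->; rewrite mul1n.
have lt_yb : y %/ b < b ^ n by rewrite ltn_divLR -?expnSr //; lia.
have -> : y + b ^ n.+1 * q = y %% b + b * (y %/ b + b ^ n * q).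
  by rewrite expnS {1}(divn_eq y b); nia.
rewrite digsum_digit ?ltn_pmod //; last by lia.
by rewrite IH // (digsum_divmod y) addnA.
Qed.

Lemma digsum_complement n z : z < b ^ n -> digsum (b ^ n - 1 - z) + digsum z = n * (b - 1).
Proof.
elim: n z => [|n IH] z ltz.
  by move: ltz; rewrite expn0 ltnS leqn0 => /eqP ->.
have lt_zb : z %/ b < b ^ n by rewrite ltn_divLR -?expnSr //; lia.
have ltz0 := ltn_pmod z (ltnW b_gt1).
have -> : b ^ n.+1 - 1 - z = (b - 1 - z %% b) + b * (b ^ n - 1 - z %/ b).
  rewrite expnS {1}(divn_eq z b).
  move: (z %/ b) (z %% b) (b ^ n) lt_zb ltz0 => z1 z0 P ltz1 ltz0'.
  have [w ->] : exists w, P = z1.+1 + w by exists (P - z1.+1); lia.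
  nia.
rewrite digsum_digit ?(digsum_divmod z); last by lia.
by have := IH _ lt_zb; lia.
Qed.

End DigitSum.

Section Repunits.

Variable b : nat.

Lemma rb0 : rb b 0 = 0.
Proof. by rewrite /rb big_ord0. Qed.

Lemma rbS l : rb b l.+1 = rb b l + b ^ l.
Proof. by rewrite /rb big_ord_recr. Qed.

Lemma rbSl l : rb b l.+1 = 1 + b * rb b l.
Proof.
rewrite /rb big_ord_recl big_distrr /=; congr (_ + _).
by apply: eq_bigr => i _; rewrite expnS.
Qed.

Lemma rb1 : rb b 1 = 1.
Proof. by rewrite rbS rb0. Qed.

Lemma rbD l m : rb b (l + m) = rb b l + b ^ l * rb b m.
Proof.
elim: m => [|m IH]; first by rewrite addn0 rb0 muln0 addn0.
by rewrite addnS !rbS IH mulnDr -expnD addnA.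
Qed.

Lemma rb_exp l : 0 < b -> (b - 1) * rb b l + 1 = b ^ l.
Proof.
move=> b_gt0; elim: l => [|l IH]; first by rewrite rb0 muln0.
by rewrite rbS expnS mulnDr -addnAC IH; nia.
Qed.

Lemma ltn_rb l m : 0 < b -> l < m -> rb b l < rb b m.
Proof.
move=> b_gt0; elim: m => [//|m IH]; rewrite ltnS leq_eqVlt => /orP[/eqP->|ltlm].
  by rewrite rbS -{1}(addn0 (rb b m)) ltn_add2l expn_gt0 b_gt0.
by apply: (ltn_trans (IH ltlm)); rewrite rbS -{1}(addn0 (rb b m)) ltn_add2l expn_gt0 b_gt0.
Qed.

Lemma rb_ge_double l : 1 < b -> 2 * l <= rb b l + 1.
Proof.
move=> b_gt1; elim: l => [|l IH]; first by rewrite rb0.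
rewrite rbS; case: l IH => [|l] IH; first by rewrite rb0 expn0.
have : b <= b ^ l.+1 by rewrite -{1}(expn1 b) leq_pexp2l //; lia.
lia.
Qed.

Lemma rb_gt l : 1 < b -> 1 < l -> l < rb b l.
Proof. by move=> b_gt1 l_gt1; have := rb_ge_double l b_gt1; lia. Qed.

(* Since [r_b(0) = 0] is allowed, this means a sum of at most [p] nonzero
   repunits. *)
Definition repsum (p t : nat) : Prop :=
  exists s : seq nat, size s = p /\ t = sumn [seq rb b c | c <- s].

Lemma repsumD p t p' t' : repsum p t -> repsum p' t' -> repsum (p + p') (t + t').
Proof.
move=> [s [<- ->]] [s' [<- ->]]; exists (s ++ s').
by rewrite size_cat map_cat sumn_cat.
Qed.

Lemma repsum_nseq d c : repsum d (d * rb b c).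
Proof.
exists (nseq d c); rewrite size_nseq; split=> //.
by elim: d => [|d IH] //=; rewrite -IH mulSn.
Qed.

Lemma repsum_pad p t k : repsum p t -> p <= k -> repsum k t.
Proof.
move=> Hpt lepk; rewrite -(subnKC lepk) -[t]addn0 -(muln0 (k - p)) -rb0.
exact/repsumD/repsum_nseq.
Qed.

Lemma repsum0 t : repsum 0 t -> t = 0.
Proof. by move=> [s [/size0nil -> ->]]. Qed.

Lemma repsum_digsum p t : 1 < b -> repsum p t -> digsum b ((b - 1) * t + p) <= p.
Proof.
move=> b_gt1 [s [<- ->]].
suff -> : (b - 1) * sumn [seq rb b c | c <- s] + size s = sumn [seq b ^ c | c <- s].
  exact: digsum_sum_exp.
elim: s => [|c s IH] /=; first by rewrite muln0.
rewrite -(rb_exp c (ltnW b_gt1)) -IH; nia.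
Qed.

(* Write [r_b(m)] as [u + j + (r_b(m) - j - u)]; [u] and the complement are
   represented by few repunits by peeling off the top digit of [u] in the
   mixed radix [r_b(m) = 1 + b r_b(m-1)]. *)
Lemma repunit_split m u : 1 < b -> 1 < m -> u < rb b m ->
  exists j p p', [/\ 0 < j < m, u + j <= rb b m, repsum p u,
                   repsum p' (rb b m - j - u) & p + p' <= (b - 1) * j + 1].
Proof.
move=> b_gt1; case: m => [|[|m]] // _; elim: m u => [|m IH] u ltu.
  move: ltu; rewrite rbSl rb1 muln1 => ltu.
  exists 1, u, (b - u); split => //; try lia.
  - by have := repsum_nseq u 1; rewrite rb1 muln1.
  - by have := repsum_nseq (b - u) 1; rewrite rb1 muln1; congr repsum; lia.
set R := rb b m.+2 in IH *.
have R_gt0 : 0 < R by rewrite /R rbSl; lia.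
rewrite rbSl -/R in ltu *.
have := divn_eq u R; have := ltn_pmod u R_gt0.
move: (u %/ R) (u %% R) => d e lte Eu; subst u.
have [e0|e_gt0] := posnP e.
  subst e; rewrite addn0 in ltu *.
  exists 1, d, (b - d); split => //; try nia.
  - exact: repsum_nseq.
  - have -> : 1 + b * R - 1 - d * R = (b - d) * R by rewrite mulnBl; lia.
    exact: repsum_nseq.
have ltdb : d < b.
  have [//|lebd] := ltnP d b.
  have : b * R <= d * R by rewrite leq_mul2r lebd orbT.
  nia.
have [j [p [p' [Hj Hje Hp Hp' Hs]]]] := IH e lte.
exists j.+1, (d + p), (b - 1 - d + p'); split; try nia.
- exact/repsumD/Hp/repsum_nseq.
- have -> : 1 + b * R - j.+1 - (d * R + e) = (b - 1 - d) * R + (R - j - e).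
    by rewrite mulnBl mulnBl mul1n; nia.
  exact/repsumD/Hp'/repsum_nseq.
Qed.

End Repunits.

Section Semigroup.

Variables a b n : nat.
Local Notation r := (rb b n).
Local Notation S := (Sab a b n).

Lemma agenE i : agen a b n i.+1 = r + a * rb b i.
Proof. by rewrite /agen subn1. Qed.

Lemma sumn_agen s :
  sumn [seq agen a b n i.+1 | i <- s] = size s * r + a * sumn [seq rb b i | i <- s].
Proof. by elim: s => [|i s IH] /=; rewrite ?muln0 // agenE IH; nia. Qed.

Lemma Sab_repsum x : S x <-> exists k t, x = k * r + a * t /\ repsum b k t.
Proof.
split=> [[s ->]|[k [t [-> [s [<- ->]]]]]]; last by exists s; rewrite sumn_agen.
by exists (size s), (sumn [seq rb b i | i <- s]); split; [exact: sumn_agen | exists s].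
Qed.

Lemma SabI k t p : repsum b p t -> p <= k -> S (k * r + a * t).
Proof.
by move=> Hpt lepk; apply/Sab_repsum; exists k, t; split=> //; apply: repsum_pad Hpt lepk.
Qed.

Lemma Sab0 : S 0.
Proof. by exists [::]. Qed.

Lemma SabD x y : S x -> S y -> S (x + y).
Proof. by move=> [s ->] [s' ->]; exists (s ++ s'); rewrite map_cat sumn_cat. Qed.

Lemma Sab_sumn s : (forall y, y \in s -> S y) -> S (sumn s).
Proof.
elim: s => [|y s IH] /= Hs; first exact: Sab0.
apply: SabD; first exact/Hs/mem_head.
by apply: IH => z zs; apply: Hs; rewrite inE zs orbT.
Qed.

Lemma Sab_agen i : S (agen a b n i.+1).
Proof. by exists [:: i]; rewrite /= addn0. Qed.

End Semigroup.

Lemma coprime_mul_modn_inj r a x y : coprime r a -> x < r -> y < r ->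
  a * x = a * y %[mod r] -> x = y.
Proof.
move=> cop ltxr ltyr; wlog lexy : x y ltxr ltyr / x <= y.
  move=> W; have [lexy|/ltnW leyx] := leqP x y; first exact: W.
  by move/esym/(W _ _ ltyr ltxr leyx).
move/eqP; rewrite eq_sym eqn_mod_dvd ?leq_mul2l ?lexy ?orbT // -mulnBr Gauss_dvdr //.
have [|d_gt0 /(dvdn_leq d_gt0)] := posnP (y - x); lia.
Qed.

Lemma coprime_mul_modn_onto r a x : 0 < a -> 0 < r -> coprime r a ->
  exists2 u, u < r & a * u = x %[mod r].
Proof.
move=> a_gt0 r_gt0 cop; case: (egcdnP r a_gt0) => ka kr Ea _.
rewrite gcdnC (eqP cop) in Ea.
exists ((ka * x) %% r); first exact: ltn_pmod.
by rewrite modnMmr mulnA [a * ka]mulnC Ea mulnDl mul1n mulnAC modnMDl.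
Qed.

Section Gaps.

Variables a b n : nat.
Hypotheses (a_gt0 : 0 < a) (b_gt1 : 1 < b) (n_gt1 : 1 < n) (cop : coprime (rb b n) a).
Local Notation r := (rb b n).
Local Notation S := (Sab a b n).

Definition fgap (j : nat) : nat := (b - 1) * j * r + a * (r - j).

Lemma gap_below_fgap x : ~ S x -> exists j y, [/\ 0 < j < n, S y & fgap j = x + y].
Proof.
move=> xNS; have ltnr := rb_gt b_gt1 n_gt1; have r_gt0 : 0 < r by lia.
have [u ltur Eu] := coprime_mul_modn_onto x a_gt0 r_gt0 cop.
have [j [p [p' [Hj leuj Hp Hp' Hpp']]]] := repunit_split b_gt1 n_gt1 ltur.
have Ex := divn_eq x r; have Eau := divn_eq (a * u) r; rewrite Eu in Eau.
move: (x %/ r) (a * u %/ r) (x %% r) Ex Eau => X A rho Ex Eau.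
(* otherwise [x] is [a u] plus at least [p] copies of [r], hence in [S] *)
have ltXAp : X < A + p.
  have [//|leAX] := ltnP X (A + p); case: xNS.
  have -> : x = (X - A) * r + a * u by rewrite Ex Eau mulnBl; nia.
  by apply: SabI Hp _; lia.
set B := (b - 1) * j in Hpp' *.
have leXr : X * r <= (B + A) * r by rewrite leq_mul2r; lia.
exists j, ((B + A - X) * r + a * (r - j - u)); split => //.
  by apply: SabI Hp' _; lia.
rewrite /fgap -/B.
have -> : a * (r - j) = a * (r - j - u) + a * u by rewrite -mulnDr subnK //; lia.
rewrite Eau Ex mulnBl mulnDl in leXr *; lia.
Qed.

Lemma Sab_fgap_repsum j : 0 < j < n -> S (fgap j) ->
  exists k q, repsum b k (r - j + q * r) /\ k + a * q = (b - 1) * j.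
Proof.
move=> Hj /Sab_repsum [k [t [Ef Hk]]]; have ltnr := rb_gt b_gt1 n_gt1.
have Et := divn_eq t r.
have Etr : t %% r = r - j.
  apply: (coprime_mul_modn_inj cop); rewrite ?ltn_pmod //; try lia.
  by rewrite modnMmr -(modnMDl k) -Ef /fgap modnMDl.
exists k, (t %/ r); split; first by rewrite -Etr addnC -Et.
apply/eqP; rewrite -(eqn_pmul2r (_ : 0 < r)); last by lia.
rewrite Et Etr /fgap in Ef; apply/eqP; nia.
Qed.

Lemma fgap_notin j : 0 < j < n -> ~ S (fgap j).
Proof.
move=> Hj /(Sab_fgap_repsum Hj) [k [q [Hk Ekq]]].
have Er := rb_exp n (ltnW b_gt1); have ler := rb_ge_double n b_gt1.
have Hds := repsum_digsum b_gt1 Hk.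
have [small|large] := ltnP (q * (a + 1)) (b ^ n); last first.
  (* [a q <= (b - 1) j] bounds [q (a + 1)] by [2 (b - 1) (n - 1) < b ^ n] *)
  have : q <= a * q by rewrite leq_pmull.
  have : (b - 1) * j <= (b - 1) * (n - 1) by rewrite leq_mul2l; lia.
  nia.
have Et : (b - 1) * (r - j + q * r) + k = (b ^ n - 1 - q * (a + 1)) + b ^ n * q.
  by rewrite -Er; nia.
rewrite Et digsum_shift // in Hds; last by lia.
have := digsum_complement b_gt1 small; rewrite mulnDr muln1 [q * a]mulnC in Hds *.
have := digsum_add b_gt1 (a * q) q; have := digsum_le b_gt1 (a * q).
have : (b - 1) * j <= (b - 1) * (n - 1) by rewrite leq_mul2l; lia.
have : (b - 1) * (n - 1) < n * (b - 1) by rewrite mulnC ltn_mul2r; lia.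
lia.
Qed.

End Gaps.

Section GenBy.

Variable G : seq nat.

Lemma gen_by0 : gen_by G 0.
Proof. by exists [::]. Qed.

Lemma gen_byD x y : gen_by G x -> gen_by G y -> gen_by G (x + y).
Proof.
move=> [s [Hs ->]] [t [Ht ->]]; exists (s ++ t).
by rewrite all_cat Hs Ht sumn_cat.
Qed.

Lemma gen_by_mem g : g \in G -> gen_by G g.
Proof. by move=> gG; exists [:: g]; rewrite /= gG addn0. Qed.

Lemma gen_byM g m : g \in G -> gen_by G (m * g).
Proof.
move=> gG; elim: m => [|m IH]; first exact: gen_by0.
by rewrite mulSn; apply/gen_byD/IH/gen_by_mem.
Qed.

End GenBy.

Section MinimalGenerators.

Variables a b n : nat.
Hypotheses (a_gt0 : 0 < a) (b_gt1 : 1 < b) (n_gt1 : 1 < n) (cop : coprime (rb b n) a).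
Local Notation r := (rb b n).
Local Notation S := (Sab a b n).

Definition agens : seq nat := [seq agen a b n i.+1 | i <- iota 0 n].

Lemma size_agens : size agens = n.
Proof. by rewrite size_map size_iota. Qed.

Lemma agen_gt0 i : 0 < agen a b n i.+1.
Proof. by rewrite agenE; have := rb_gt b_gt1 n_gt1; lia. Qed.

Lemma agens_uniq : uniq agens.
Proof.
rewrite map_inj_uniq ?iota_uniq // => i j /eqP.
rewrite !agenE eqn_add2l eqn_mul2l (negbTE (lt0n_neq0 a_gt0)) /= => /eqP Eij.
by have [/(ltn_rb (ltnW b_gt1))|/(ltn_rb (ltnW b_gt1))|] := ltngtP i j; rewrite ?Eij ?ltnn.
Qed.

(* [a_{i+n+1} = a_{i+1} + a b^i a_1] *)
Lemma gen_by_agen i : gen_by agens (agen a b n i.+1).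
Proof.
have agens1 k : k < n -> agen a b n k.+1 \in agens.
  by move=> ltkn; apply: map_f; rewrite mem_iota.
elim: i {-2}i (leqnn i) => [|m IH] i leim.
  by apply/gen_by_mem/agens1; lia.
have [ltin|lein] := ltnP i n; first exact/gen_by_mem/agens1.
have -> : agen a b n i.+1 = agen a b n (i - n).+1 + (a * b ^ (i - n)) * agen a b n 0.+1.
  by rewrite !agenE rb0 muln0 addn0 -{1}(subnK lein) rbD; nia.
by apply: gen_byD; [apply: IH; lia | apply/gen_byM/agens1; lia].
Qed.

Lemma Sab_gen_by x : S x <-> gen_by agens x.
Proof.
split=> [[s ->]|[s [Hs ->]]].
  elim: s => [|i s IH] /=; [exact: gen_by0 | exact: gen_byD (gen_by_agen i) IH].
apply: Sab_sumn => y /(allP Hs) /mapP [i _ ->]; exact: Sab_agen.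
Qed.

(* The [r]-part of a sum of two nonzero elements exceeds [r], while the
   [a]-part of [a_{i+1}] is too small to make up the difference mod [r]. *)
Lemma agen_indecomposable i x y : i < n -> S x -> S y -> x + y = agen a b n i.+1 ->
  x = 0 \/ y = 0.
Proof.
move=> ltin /Sab_repsum [k [t [-> Hk]]] /Sab_repsum [k' [t' [-> Hk']]].
rewrite agenE => E.
have [k0|k_gt0] := posnP k.
  by left; move: Hk; rewrite k0 => /repsum0 ->; rewrite muln0.
have [k0|k'_gt0] := posnP k'.
  by right; move: Hk'; rewrite k0 => /repsum0 ->; rewrite muln0.
exfalso; have ltir : rb b i < r := ltn_rb (ltnW b_gt1) ltin.
have lekr : r <= k * r by rewrite leq_pmull.
have lett : t + t' <= rb b i by rewrite -(leq_pmul2l a_gt0) mulnDr; lia.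
have Ed : a * (rb b i - (t + t')) = (k + k' - 1) * r.
  by rewrite mulnBr mulnBl mul1n mulnDl mulnDr; lia.
have : r %| rb b i - (t + t') by rewrite -(Gauss_dvdr _ cop) Ed dvdn_mull.
have [d0|d_gt0 /(dvdn_leq d_gt0)] := posnP (rb b i - (t + t')); last by lia.
by move: Ed; rewrite d0 muln0 => /esym/eqP; rewrite muln_eq0; lia.
Qed.

Lemma agens_min_gen_set : is_min_gen_set S agens.
Proof.
have agensS y : y \in agens -> S y by move=> /gen_by_mem /Sab_gen_by.
have agens_gt0 y : y \in agens -> 0 < y by move=> /mapP [i _ ->]; exact: agen_gt0.
split; [exact: agens_uniq | split; [exact: Sab_gen_by |]].
move=> g /mapP [i]; rewrite mem_iota add0n => /andP [_ ltin] -> [s [Hs Es]].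
have Hs' y : y \in s -> y \in agens /\ y != agen a b n i.+1.
  by move/(allP Hs); rewrite mem_rem_uniq ?agens_uniq // inE => /andP [].
clear Hs; case: s Hs' Es => [|y [|y' s]] Hs' /= Es.
- by move: (agen_gt0 i); rewrite Es.
- by have [_] := Hs' y (mem_head _ _); rewrite Es addn0 eqxx.
have ysS z : z \in [:: y, y' & s] -> S z by move=> /Hs' [/agensS].
have [y0|s0] := agen_indecomposable ltin (ysS y (mem_head _ _))
  (Sab_sumn (fun z zs => ysS z (mem_behead zs))) (esym Es).
  by have [/agens_gt0] := Hs' y (mem_head _ _); rewrite y0.
have y'_in : y' \in [:: y, y' & s] by rewrite !inE eqxx orbT.
by have [/agens_gt0] := Hs' y' y'_in; move: s0 => /=; lia.
Qed.

End MinimalGenerators.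

Lemma small_elts_exist (P : nat -> Prop) F : exists L, is_small_elts P F L.
Proof.
exists [seq x <- iota 0 F | excluded_middle_informative (P x)].
split=> [|x]; first by rewrite filter_uniq ?iota_uniq.
rewrite mem_filter mem_iota; case: excluded_middle_informative => /= [Px|nPx].
  by rewrite add0n; split=> [|[]].
by split=> [//|[]].
Qed.

Lemma bigmax_mem_seq (s : seq nat) : s != [::] -> \max_(x <- s) x \in s.
Proof.
elim: s => [//|f s IH] _; rewrite big_cons inE.
case: s IH => [_|f' s IH]; first by rewrite big_nil maxn0 eqxx.
move: (IH isT); set m := \max_(g <- f' :: s) g => m_in.
by rewrite /maxn; case: ltnP; rewrite ?m_in ?orbT ?eqxx.
Qed.

Section WilfFromGapCover.

Variables (P : nat -> Prop) (fs : seq nat).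
Hypothesis fs_gaps : forall f, f \in fs -> ~ P f.
Hypothesis gap_cover : forall h, ~ P h -> exists f y, [/\ f \in fs, P y & f = h + y].

Lemma frobenius_bigmax : fs != [::] -> is_frobenius P (\max_(f <- fs) f).
Proof.
move=> fs_nil; split; first exact/fs_gaps/bigmax_mem_seq.
move=> y lt_max_y; apply: NNPP => /gap_cover [f [z [f_in _ Ef]]].
have : f <= \max_(g <- fs) g by exact: leq_bigmax_seq.
lia.
Qed.

Lemma wilf_of_gap_cover F L : is_frobenius P F -> is_small_elts P F L ->
  F + 1 <= (size fs).+1 * size L.
Proof.
move=> [FN FP] [L_uniq L_small].
have le_fs f : f \in fs -> f <= F by move=> /fs_gaps fN; case: (leqP f F) => // /FP.
have : {subset iota 0 F.+1 <= [seq f - y | f <- fs, y <- L] ++ L}.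
  move=> x; rewrite mem_iota /= mem_cat => lexF.
  case: (classic (P x)) => [Px|/gap_cover [f [y [f_in Py Ef]]]].
    apply/orP; right; apply/L_small; split => //.
    by case: (ltngtP x F) => // xF; [lia | rewrite -xF in FN].
  apply/orP; left; rewrite (_ : x = f - y); last by lia.
  apply: allpairs_f => //; apply/L_small; split => //.
  by have := le_fs f f_in; case: (ltngtP y F) => // yF; [lia | rewrite yF in Py].
move/(uniq_leq_size (iota_uniq 0 F.+1)).
by rewrite size_cat size_allpairs size_iota mulSnr addn1.
Qed.

End WilfFromGapCover.

Theorem mainTheorem20 (a b n : nat) :
  0 < a -> 1 < b -> 1 < n -> coprime (rb b n) a ->
  exists (F : nat) (G L : seq nat),
    [/\ is_frobenius (Sab a b n) F,
        is_min_gen_set (Sab a b n) G,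
        is_small_elts (Sab a b n) F L &
        F + 1 <= size G * size L].
Proof.
move=> a_gt0 b_gt1 n_gt1 cop.
pose fs := [seq fgap a b n j | j <- iota 1 n.-1].
have fs_gaps f : f \in fs -> ~ Sab a b n f.
  by move=> /mapP [j]; rewrite mem_iota => Hj ->; apply: fgap_notin => //; lia.
have gap_cover h : ~ Sab a b n h -> exists f y, [/\ f \in fs, Sab a b n y & f = h + y].
  move=> /(gap_below_fgap a_gt0 b_gt1 n_gt1 cop) [j [y [Hj Sy Ej]]].
  by exists (fgap a b n j), y; split => //; apply: map_f; rewrite mem_iota; lia.
have size_fs : size fs = n.-1 by rewrite size_map size_iota.
have fs_nil : fs != [::] by rewrite -size_eq0 size_fs; lia.
have HF := frobenius_bigmax fs_gaps gap_cover fs_nil.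
have [L HL] := small_elts_exist (Sab a b n) (\max_(f <- fs) f).
exists (\max_(f <- fs) f), (agens a b n), L; split => //; first exact: agens_min_gen_set.
have := wilf_of_gap_cover fs_gaps gap_cover HF HL.
by rewrite size_fs size_agens prednK // ltnW.
Qed.
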